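(* Tijdeman's Conjecture $(\bmod~900)$ is false. That is, there exist subsets $\bar{A},\bar{B}\subseteq \mathbb{Z}/900\mathbb{Z}$ with $\bar{0}\in\bar{A}\cap\bar{B}$ such that $\bar{A}\oplus\bar{B}=\mathbb{Z}/900\mathbb{Z}$ is a factorization, $\bar{A}$ has a lifting $A\subseteq\mathbb{Z}$ with $0\in A$ and $\gcd\{a : a\in A\}=1$, and $\bar{B}$ has a lifting $B\subseteq\mathbb{Z}$ with $0\in B$ and $\gcd\{b: b\in B\}=1$.
   Context: A factorization $\bar{A}\oplus\bar{B}=G$ of a finite cyclic group $G=\mathbb{Z}/m\mathbb{Z}$ means every $g\in G$ has a unique representation $g=\bar a+\bar b$ with $\bar a\in\bar A$, $\bar b\in\bar B$. A lifting of $\bar A$ is a set $A\subseteq\mathbb{Z}$ of integer representatives, one for each element of $\bar A$ (reduction mod $m$ is a bijection $A\to\bar A$). Tijdeman's Conjecture $(\bmod~m)$ asserts: if $\bar A\oplus\bar B=\mathbb{Z}/m\mathbb{Z}$ with $\bar 0\in\bar A\cap\bar B$ and $\bar A$ lifts to a set $A\subseteq\mathbb{Z}$ with $0\in A$ and $\gcd\{a:a\in A\}=1$, then every lifting $B\subseteq\mathbb{Z}$ of $\bar B$ with $0\in B$ has $\gcd\{b:b\in B\}\neq 1$. *)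

From mathcomp Require Import all_boot all_order all_algebra.
Set Implicit Arguments. Unset Strict Implicit. Unset Printing Implicit Defensive.
Import GRing.Theory Num.Theory.
Local Open Scope ring_scope.

(* Reduction mod m of an integer, as an element of 'Z_m (requires 1 < m
   for 'Z_m to be Z/mZ). *)
Definition redZ (m : nat) (x : int) : 'Z_m := x%:~R.

Definition is_factorization (m : nat) (Abar Bbar : {set 'Z_m}) : Prop :=
  forall g : 'Z_m,
    #|[set ab in setX Abar Bbar | ab.1 + ab.2 == g]| = 1%N.

Definition is_lifting (m : nat) (Abar : {set 'Z_m}) (A : seq int) : Prop :=
  uniq (map (@redZ m) A) /\ [set x in map (@redZ m) A] = Abar.

Definition gcd_list (A : seq int) : int := foldr gcdz 0 A.

From mathcomp Require Import all_boot all_order all_algebra.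
Local Open Scope ring_scope.

(* A = {576 k mod 900 : k < 5} + {0, 100, 200}
   + {0, 225} has gcd 1 because gcd(100, 225, 576) = 1, and B contains the
   coprime triple 75, 126, 280.  That the reductions of A and B tile Z/900Z is
   a finite check: the 900 sums a + b are pairwise distinct mod 900, hence
   exhaust Z/900Z. *)

Section SumsetFactorization.

Variables (m : nat) (sA sB : seq 'Z_m).
Hypotheses (uniq_sA : uniq sA) (uniq_sB : uniq sB).
Hypothesis uniq_sumset : uniq [seq a + b | a <- sA, b <- sB].
Hypothesis size_sAsB : (size sA * size sB)%N = #|'Z_m|.

Let D := setX [set x in sA] [set x in sB].
Let add (ab : 'Z_m * 'Z_m) := ab.1 + ab.2.

Lemma imset_add_sumset : add @: D = [set x in [seq a + b | a <- sA, b <- sB]].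
Proof.
apply/setP => x; rewrite inE; apply/imsetP/allpairsP => [[[a b]] | [[a b]]] /=.
  by rewrite in_setX !inE => /andP[ha hb] ->; exists (a, b).
by case=> ha hb ->; exists (a, b); rewrite // in_setX !inE ha hb.
Qed.

Lemma card_imset_add : #|add @: D| = #|'Z_m|.
Proof. by rewrite imset_add_sumset cardsE (card_uniqP uniq_sumset) size_allpairs size_sAsB. Qed.

Lemma is_factorization_sumset : is_factorization [set x in sA] [set x in sB].
Proof.
have card_D : #|D| = #|'Z_m|.
  by rewrite cardsX !cardsE (card_uniqP uniq_sA) (card_uniqP uniq_sB).
have add_inj : {in D &, injective add}.
  by apply/imset_injP; rewrite card_imset_add card_D.
have add_onto : add @: D = setT.
  by apply/eqP; rewrite eqEcard subsetT cardsT card_imset_add /=.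
move=> g; have /imsetP[ab Dab ->] : g \in add @: D by rewrite add_onto inE.
rewrite -(cards1 ab); apply: eq_card => ab'.
rewrite in_set in_set1 -/D; apply/andP/eqP => [[Dab' /eqP]|->]; last by [].
exact: add_inj.
Qed.

End SumsetFactorization.

Lemma zero_in_reductions (m : nat) (A : seq int) :
  0 \in A -> 0 \in [set y in map (@redZ m) A].
Proof. by move/(map_f (@redZ m)); rewrite inE /redZ mulr0z. Qed.

Definition A900 : seq int :=
  [seq a + d | a <- [:: 0; 576; 252; 828; 504]%Z,
               d <- [seq b + c | b <- [:: 0; 100; 200]%Z, c <- [:: 0; 225]%Z]].

Definition B900 : seq int :=
  [:: 0; 30; 60; 75; 120; 126; 150; 210; 240; 280; 306; 330; 360; 390; 420;
      486; 510; 525; 540; 570; 580; 600; 660; 666; 690; 720; 840; 846; 870; 880]%Z.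

Definition A900_mod : seq 'Z_900 := map (@redZ 900) A900.
Definition B900_mod : seq 'Z_900 := map (@redZ 900) B900.

Lemma uniq_A900_mod : uniq A900_mod.
Proof. by vm_compute. Qed.

Lemma uniq_B900_mod : uniq B900_mod.
Proof. by vm_compute. Qed.

Lemma uniq_sumset_900_mod :
  uniq [seq a + b | a <- A900_mod, b <- B900_mod].
Proof. by vm_compute. Qed.

Lemma gcd_A900 : gcd_list A900 = 1.
Proof. by vm_compute. Qed.

Lemma gcd_B900 : gcd_list B900 = 1.
Proof. by vm_compute. Qed.

Theorem theorem2p1 :
  exists (Abar Bbar : {set 'Z_900}),
    0 \in Abar /\ 0 \in Bbar /\
    is_factorization Abar Bbar /\
    (exists A : seq int, is_lifting Abar A /\ (0 \in A) /\ gcd_list A = 1) /\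
    (exists B : seq int, is_lifting Bbar B /\ (0 \in B) /\ gcd_list B = 1).
Proof.
have A0 : 0 \in A900 by vm_compute.
have B0 : 0 \in B900 by vm_compute.
exists [set x in A900_mod], [set x in B900_mod].
split; first exact: zero_in_reductions A0.
split; first exact: zero_in_reductions B0.
split.
  apply: is_factorization_sumset uniq_sumset_900_mod _;
    [exact: uniq_A900_mod | exact: uniq_B900_mod |].
  by rewrite !size_map !size_allpairs card_ord.
split.
  exists A900; split; [by split; first exact: uniq_A900_mod | exact: conj A0 gcd_A900].
exists B900; split; [by split; first exact: uniq_B900_mod | exact: conj B0 gcd_B900].
Qed.
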